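(* Let $n,d\in\mathbb{N}$ and let $k\geq 3$ be an integer such that $m=nd/k\in\mathbb{N}$ and $\binom{m}{2}<\binom{n}{k}$. Then \[\mathbb{P}_{\pi_{\mathcal{B}}}\big(\mathcal{B}^*(n,d,k)\big)\geq 1-\binom{m}{2}\binom{n}{k}^{-1}.\] Consequently, if $\mathcal{A}$ is an algorithm sampling from $\mathcal{B}(n,d,k)$ with output distribution $\sigma_{\mathcal{B}}$ satisfying $d_{TV}(\sigma_{\mathcal{B}},\pi_{\mathcal{B}})\leq\varepsilon$ for some $\varepsilon\in(0,1)$, and $\binom{m}{2}\leq c_0\binom{n}{k}$ for some $c_0\in(0,1-\varepsilon)$, then the output distribution $\sigma_{\mathcal{H}}$ of \textsc{HypergraphSampling}$((d,\dots,d),k,\mathcal{A})$ satisfies $d_{TV}(\sigma_{\mathcal{H}},\pi_{\mathcal{H}})\leq \frac{3\varepsilon}{2(1-c_0)}$, and its expected runtime is at most $(1-c_0-\varepsilon)^{-1}(\tau+\rho)$, where $\tau$ is the (expected) runtime of $\mathcal{A}$ and $\rho$ is the runtime of the H-simplicity test.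
   Context: $\mathcal{B}(n,d,k)$ denotes the set of simple bipartite graphs with fixed bipartition $X=\{x_1,\dots,x_n\}$, $Y=\{y_1,\dots,y_m\}$ in which every node of $X$ has degree $d$ and every node of $Y$ has degree $k$. $B$ is H-simple if distinct nodes of $Y$ have distinct neighbourhoods; $\mathcal{B}^*(n,d,k)$ is the set of H-simple elements of $\mathcal{B}(n,d,k)$, and $\pi_{\mathcal{B}}$ is the uniform distribution on $\mathcal{B}(n,d,k)$. For an H-simple $B$, $\varphi(B)$ is the simple $k$-uniform hypergraph on $X$ with edge set $\{\mathcal{N}_B(y):y\in Y\}$; $\pi_{\mathcal{H}}$ is the uniform distribution on the set of simple $k$-uniform $d$-regular hypergraphs on $X$. \textsc{HypergraphSampling}$(\boldsymbol{d},k,\mathcal{A})$ repeatedly samples $B$ using $\mathcal{A}$ until $B$ is H-simple, then outputs $\varphi(B)$; the H-simplicity test also constructs $\varphi(B)$. $d_{TV}$ is total variation distance. *)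

From HB Require Import structures.
From mathcomp Require Import all_boot all_order all_algebra.
From mathcomp Require Import all_classical all_reals all_analysis.
Import Order.TTheory GRing.Theory Num.Theory.
Local Open Scope ring_scope.

(* A bipartite graph with fixed bipartition X = 'I_n, Y = 'I_m, given by
   its edge set (x, y). *)
Definition bigraph (n m : nat) := {set 'I_n * 'I_m}.

Definition nbhdY {n m} (B : bigraph n m) (y : 'I_m) : {set 'I_n} :=
  [set x | (x, y) \in B].
Definition nbhdX {n m} (B : bigraph n m) (x : 'I_n) : {set 'I_m} :=
  [set y | (x, y) \in B].

Definition biregular {n m} (d k : nat) (B : bigraph n m) : bool :=
  [forall x, #|nbhdX B x| == d] && [forall y, #|nbhdY B y| == k].

Definition Bset n m (d k : nat) : {set bigraph n m} :=
  [set B | biregular d k B].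

Definition H_simple {n m} (B : bigraph n m) : bool := injectiveb (nbhdY B).

Definition Bstar n m (d k : nat) : {set bigraph n m} :=
  [set B in Bset n m d k | H_simple B].

(* hypergraphs on X = 'I_n, given by their (simple) edge set *)
Definition hypergraph (n : nat) := {set {set 'I_n}}.

Definition phi {n m} (B : bigraph n m) : hypergraph n :=
  [set nbhdY B y | y : 'I_m].

Definition unif_reg {n} (d k : nat) (H : hypergraph n) : bool :=
  [forall e in H, #|e| == k] && [forall x, #|[set e in H | x \in e]| == d].

Definition Hset n (d k : nat) : {set hypergraph n} := [set H | unif_reg d k H].

Definition is_distr {R : realType} {T : finType} (mu : T -> R) : Prop :=
  (forall x, 0 <= mu x) /\ \sum_x mu x = 1.

Definition prob {R : realType} {T : finType} (mu : T -> R) (A : {set T}) : R :=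
  \sum_(x in A) mu x.

Definition unif (R : realType) {T : finType} (A : {set T}) (x : T) : R :=
  if x \in A then #|A|%:R^-1 else 0.

Definition dTV {R : realType} {T : finType} (mu nu : T -> R) : R :=
  2^-1 * \sum_x `|mu x - nu x|.

Definition piB (R : realType) n m (d k : nat) : bigraph n m -> R :=
  unif R (Bset n m d k).
Definition piH (R : realType) n (d k : nat) : hypergraph n -> R :=
  unif R (Hset n d k).

(* Output distribution of HypergraphSampling((d,...,d),k,A) when A has
   output distribution sigma: the law of phi(B) where B ~ sigma conditioned
   on B being H-simple (rejection sampling). *)
Definition hs_output {R : realType} {n m} (d k : nat) (sigma : bigraph n m -> R)
  (H : hypergraph n) : R :=
  (\sum_(B in Bstar n m d k | phi B == H) sigma B) / prob sigma (Bstar n m d k).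

(* Expected runtime of HypergraphSampling: each round costs tau (expected
   runtime of A) + rho (H-simplicity test + construction of phi(B)), and round
   t+1 is executed iff the first t rounds all failed, which has probability
   (1 - p)^t where p = sigma(B^* ).  Hence
   E[runtime] = sum_{t>=0} (1-p)^t (tau + rho)   (in \bar R, +oo allowed). *)
Definition hs_runtime {R : realType} {n m} (d k : nat) (sigma : bigraph n m -> R)
  (tau rho : R) : \bar R :=
  (\sum_(t <oo) ((tau + rho) * (1 - prob sigma (Bstar n m d k)) ^+ t)%:E)%E.

From HB Require Import structures.
From mathcomp Require Import all_boot all_order all_algebra.
From mathcomp Require Import all_classical all_reals all_analysis.
Import Order.TTheory GRing.Theory Num.Theory.
(* Imported last so that [set0] and [subsetP] refer to finite sets again. *)
From mathcomp Require Import fintype finset zify ring lra.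

(* Fix two nodes y1 <> y2 of Y and a k-set S.  Among the graphs of B(n,d,k)
   with N(y1) = S, the number with N(y2) = T does not decrease when T trades
   an element u of S for an element v outside S: a switching moves y2 from u
   to v and rebalances the remaining neighbours of u and v, and it is
   injective because it picks the new neighbours of u through a fixed
   injection between two layers of subsets.  Starting from T = S this shows
   that N(y1) = N(y2) has probability at most 1/C(n,k), and a union bound over
   the C(m,2) pairs gives the first claim.
   Relabelling edges shows that phi has fibres of equal size over the simple
   d-regular k-uniform hypergraphs, so phi pushes the uniform distribution on
   B^*(n,d,k) to pi_H, and HypergraphSampling outputs the image under phi of
   sigma conditioned on B^*.  Conditioning on an event of pi_B-probability
   q >= 1 - c0 multiplies total variation by at most 1/q, and each round
   succeeds with probability at least 1 - c0 - eps, whence the geometric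
   bound on the runtime. *)

Set Implicit Arguments.
Unset Strict Implicit.
Unset Printing Implicit Defensive.

Section EnumEmbed.
Variables (T T' : finType) (D : {set T}) (E : {set T'}) (e0 : T').

Definition enum_embed (x : T) : T' := nth e0 (enum E) (index x (enum D)).

Hypothesis leDE : #|D| <= #|E|.

Let index_lt x : x \in D -> index x (enum D) < size (enum E).
Proof.
by move=> xD; rewrite -cardE (leq_trans _ leDE) // cardE index_mem mem_enum.
Qed.

Lemma enum_embed_inj : {in D &, injective enum_embed}.
Proof.
move=> x y xD yD /eqP; rewrite nth_uniq ?index_lt ?enum_uniq // => /eqP eq_idx.
by rewrite -[x](nth_index x (s := enum D)) ?mem_enum // eq_idx nth_index ?mem_enum.
Qed.

Lemma enum_embed_mem : {in D, forall x, enum_embed x \in E}.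
Proof. by move=> x xD; rewrite -mem_enum mem_nth ?index_lt. Qed.

End EnumEmbed.

Lemma card_indicator (T : finType) (A : {set T}) : #|A| = \sum_x (x \in A : nat).
Proof. by rewrite -sum1_card big_mkcond; apply: eq_bigr => x _; case: (x \in A). Qed.

Lemma sum_card_eq (T : finType) (As Bs : seq {set T}) :
  (forall x, \sum_(A <- As) (x \in A : nat) = \sum_(B <- Bs) (x \in B : nat)) ->
  \sum_(A <- As) #|A| = \sum_(B <- Bs) #|B|.
Proof.
move=> eq_x; under eq_bigr do rewrite card_indicator.
under [RHS]eq_bigr do rewrite card_indicator.
by rewrite exchange_big [RHS]exchange_big; apply: eq_bigr => x _; apply: eq_x.
Qed.

Lemma card_eq_off_pair (T : finType) (A A' : {set T}) (u v : T) : u != v ->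
  (forall x, x != u -> x != v -> (x \in A) = (x \in A')) ->
  (u \in A) + (v \in A) = (u \in A') + (v \in A') :> nat -> #|A| = #|A'|.
Proof.
move=> neq_uv eq_off eq_uv; have neq_vu : v != u by rewrite eq_sym.
rewrite !card_indicator (bigD1 u) //= (bigD1 v) //= [in RHS](bigD1 u) //= [in RHS](bigD1 v) //=.
rewrite !addnA eq_uv; congr (_ + _); apply: eq_bigr => x /andP[xu xv].
by rewrite eq_off.
Qed.

Lemma card_fibers (I J : finType) (X : {set I}) (f : I -> J) :
  #|X| = \sum_j #|[set x in X | f x == j]|.
Proof.
rewrite -sum1_card (partition_big f xpredT) //=; apply: eq_bigr => j _.
by rewrite -sum1_card; apply: eq_bigl => x; rewrite inE.
Qed.

Lemma card_bigcup_le (I T : finType) (P : pred I) (F : I -> {set T}) :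
  #|\bigcup_(i | P i) F i| <= \sum_(i | P i) #|F i|.
Proof.
elim/big_rec2: _ => [|i U s _ le_Us]; first by rewrite cards0.
by rewrite (leq_trans (leq_card_setU _ _)) // leq_add2l.
Qed.

Lemma bin_pred_half_le w : 'C(w, (w./2).-1) <= 'C(w, w./2).
Proof.
case def_h: w./2 => [|j] //=.
have lt_jw : j.+1 <= w - j.
  have : (w./2).*2 <= w by rewrite -[w in _ <= w]odd_double_half leq_addl.
  rewrite def_h; lia.
by rewrite -(@leq_pmul2l j.+1) // mul_bin_left leq_mul2r lt_jw orbT.
Qed.

Section Grow.
Variable T : finType.

Definition ksubsets (W : {set T}) j := [set P : {set T} | P \subset W & #|P| == j].

(* Any fixed injection between these two layers of subsets of [W] would do;
   it is what makes the switching below injective. *)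
Definition grow (W : {set T}) : {set T} -> {set T} :=
  enum_embed (ksubsets W (#|W|./2).-1) (ksubsets W #|W|./2) set0.

Let ksubsets_le W : #|ksubsets W (#|W|./2).-1| <= #|ksubsets W #|W|./2|.
Proof. by rewrite !cards_draws bin_pred_half_le. Qed.

Lemma grow_inj W : {in ksubsets W (#|W|./2).-1 &, injective (grow W)}.
Proof. exact: enum_embed_inj (ksubsets_le W). Qed.

Lemma grow_ksubset W P : P \in ksubsets W (#|W|./2).-1 ->
  grow W P \subset W /\ #|grow W P| = #|W|./2.
Proof. by move/(enum_embed_mem set0 (ksubsets_le W)); rewrite inE => /andP[-> /eqP]. Qed.

End Grow.

Lemma in_nbhdX n m (B : bigraph n m) x y : (y \in nbhdX B x) = ((x, y) \in B).
Proof. by rewrite inE. Qed.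

Lemma in_nbhdY n m (B : bigraph n m) x y : (x \in nbhdY B y) = ((x, y) \in B).
Proof. by rewrite inE. Qed.

Ltac mem_cases :=
  repeat match goal with |- context [?a \in ?A] => case: (a \in A) end; rewrite //=.

Section Switching.
Variables (n m d k : nat) (y1 y2 : 'I_m).
Hypothesis neq_y12 : y1 != y2.

Definition pinned (S T : {set 'I_n}) : {set bigraph n m} :=
  [set B in Bset n m d k | (nbhdY B y1 == S) && (nbhdY B y2 == T)].

Section Switch.
Variables (u v : 'I_n).

Definition sw_common (B : bigraph n m) := nbhdX B u :&: nbhdX B v.
Definition sw_diff (B : bigraph n m) :=
  [set y | (y \in nbhdX B u) != (y \in nbhdX B v)] :\ y1 :\ y2.
Definition sw_old (B : bigraph n m) := nbhdX B u :&: sw_diff B.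
Definition sw_new (B : bigraph n m) := grow (sw_diff B) (sw_old B).
Definition nbhd_u' (B : bigraph n m) := y1 |: (sw_common B :|: sw_new B).
Definition nbhd_v' (B : bigraph n m) := y2 |: (sw_common B :|: (sw_diff B :\: sw_new B)).

(* [u] keeps [y1] and trades [y2] and its private neighbours [sw_old B] in
   [sw_diff B] for the larger set [sw_new B]; [v] takes [y2] and the rest. *)
Definition switch (B : bigraph n m) : bigraph n m :=
  [set p | if p.1 == u then p.2 \in nbhd_u' B
           else if p.1 == v then p.2 \in nbhd_v' B else p \in B].

Lemma in_switch B x y : ((x, y) \in switch B) =
  if x == u then y \in nbhd_u' B else if x == v then y \in nbhd_v' B else (x, y) \in B.
Proof. by rewrite inE. Qed.

Lemma switch_nbhdX B x : nbhdX (switch B) x =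
  if x == u then nbhd_u' B else if x == v then nbhd_v' B else nbhdX B x.
Proof.
apply/setP => y; rewrite in_nbhdX in_switch.
by case: (x == u) => //; case: (x == v) => //; rewrite in_nbhdX.
Qed.

Variables (S T : {set 'I_n}).
Hypotheses (uS : u \in S) (uT : u \in T) (vS : v \notin S) (vT : v \notin T).

Let neq_uv : u != v. Proof. by apply: contraNneq vS => <-. Qed.
Let neq_y21 : y2 != y1. Proof. by rewrite eq_sym. Qed.
Let neq_vu : v != u. Proof. by rewrite eq_sym. Qed.

Section Pinned.
Variable B : bigraph n m.
Hypothesis pinB : B \in pinned S T.

Let nbhdY_y1 : nbhdY B y1 = S. Proof. by case/setIdP: pinB => _ /andP[/eqP]. Qed.
Let nbhdY_y2 : nbhdY B y2 = T. Proof. by case/setIdP: pinB => _ /andP[_ /eqP]. Qed.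
Let uy1 : (u, y1) \in B. Proof. by rewrite -in_nbhdY nbhdY_y1. Qed.
Let uy2 : (u, y2) \in B. Proof. by rewrite -in_nbhdY nbhdY_y2. Qed.
Let vy1 : (v, y1) \notin B. Proof. by rewrite -in_nbhdY nbhdY_y1. Qed.
Let vy2 : (v, y2) \notin B. Proof. by rewrite -in_nbhdY nbhdY_y2. Qed.
Let deg_X x : #|nbhdX B x| = d.
Proof. by case/setIdP: pinB; rewrite inE => /andP[/forallP/(_ x)/eqP]. Qed.

Ltac sw_simpl :=
  rewrite ?eqxx ?uy1 ?uy2 ?(negPf vy1) ?(negPf vy2) ?(negPf neq_y12) ?(negPf neq_y21)
    ?(negPf neq_uv) /=;
  mem_cases.

Ltac sw_cases y :=
  try have := in_sw_new y;
  rewrite ?big_cons ?big_nil !inE;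
  case: (eqVneq y y1) => [->|_]; [|case: (eqVneq y y2) => [->|_]]; sw_simpl.

Lemma sw_diff_card : #|sw_diff B| = (#|sw_old B|).+1.*2.
Proof.
have eq_sum : d + #|sw_diff B| = d + (1 + (1 + (#|sw_old B| + #|sw_old B|))).
  move: (@sum_card_eq _ [:: nbhdX B u; sw_diff B]
           [:: nbhdX B v; [set y1]; [set y2]; sw_old B; sw_old B]).
  rewrite !big_cons !big_nil !addn0 !deg_X !cards1; apply=> y; by sw_cases y.
by rewrite (addnI eq_sum) doubleS -addnn.
Qed.

Lemma sw_old_ksubset : sw_old B \in ksubsets (sw_diff B) (#|sw_diff B|./2).-1.
Proof. by rewrite inE subsetIr sw_diff_card doubleK eqxx. Qed.

Let sw_new_sub : sw_new B \subset sw_diff B.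
Proof. by case: (grow_ksubset sw_old_ksubset). Qed.

Let sw_new_card : #|sw_new B| = (#|sw_old B|).+1.
Proof. by case: (grow_ksubset sw_old_ksubset) => _ ->; rewrite sw_diff_card doubleK. Qed.

Let in_sw_new (y : 'I_m) : (y \in sw_new B) ==> (y \in sw_diff B).
Proof. by apply/implyP => /(subsetP sw_new_sub). Qed.

Lemma nbhd_u_split : nbhdX B u = y1 |: (y2 |: (sw_common B :|: sw_old B)).
Proof. by apply/setP => y; sw_cases y. Qed.

Lemma nbhd_v_split : nbhdX B v = sw_common B :|: (sw_diff B :\: sw_old B).
Proof. by apply/setP => y; sw_cases y. Qed.

Lemma sw_common_switch : sw_common (switch B) = sw_common B.
Proof.
by rewrite /sw_common !switch_nbhdX eqxx (negPf neq_vu) eqxx; apply/setP => y; sw_cases y.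
Qed.

Lemma sw_diff_switch : sw_diff (switch B) = sw_diff B.
Proof.
by rewrite /sw_diff !switch_nbhdX eqxx (negPf neq_vu) eqxx; apply/setP => y; sw_cases y.
Qed.

Lemma sw_old_switch : sw_old (switch B) = sw_new B.
Proof.
rewrite /sw_old sw_diff_switch switch_nbhdX eqxx.
by apply/setP => y; sw_cases y.
Qed.

Lemma card_nbhd_u' : #|nbhd_u' B| = d.
Proof.
have eq_sum : #|nbhd_u' B| + (1 + #|sw_old B|) = d + #|sw_new B|.
  move: (@sum_card_eq _ [:: nbhd_u' B; [set y2]; sw_old B] [:: nbhdX B u; sw_new B]).
  rewrite !big_cons !big_nil !addn0 deg_X cards1; apply=> y; by sw_cases y.
by apply/eqP; rewrite -(eqn_add2r (1 + #|sw_old B|)) eq_sum sw_new_card add1n addnS.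
Qed.

Lemma card_nbhd_v' : #|nbhd_v' B| = d.
Proof.
have eq_sum : #|nbhd_v' B| + #|sw_new B| = 1 + (d + #|sw_old B|).
  move: (@sum_card_eq _ [:: nbhd_v' B; sw_new B] [:: [set y2]; nbhdX B v; sw_old B]).
  rewrite !big_cons !big_nil !addn0 deg_X cards1; apply=> y; by sw_cases y.
by apply/eqP; rewrite -(eqn_add2r #|sw_new B|) eq_sum sw_new_card add1n addnS.
Qed.

Lemma card_switch_nbhdY y : #|nbhdY (switch B) y| = #|nbhdY B y|.
Proof.
apply: (card_eq_off_pair neq_uv).
  by move=> x xu xv; rewrite !in_nbhdY in_switch (negPf xu) (negPf xv).
rewrite !in_nbhdY !in_switch eqxx (negPf neq_vu) eqxx; by sw_cases y.
Qed.

Lemma switch_nbhdY_y1 : nbhdY (switch B) y1 = S.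
Proof.
apply/setP => x; rewrite in_nbhdY in_switch.
case: (eqVneq x u) => [->|xu]; first by rewrite uS !inE eqxx.
case: (eqVneq x v) => [->|xv]; last by rewrite -in_nbhdY nbhdY_y1.
by rewrite (negPf vS); have := in_sw_new y1; rewrite !inE; sw_simpl.
Qed.

Lemma switch_nbhdY_y2 : nbhdY (switch B) y2 = v |: T :\ u.
Proof.
apply/setP => x; rewrite in_nbhdY in_switch !inE.
case: (eqVneq x u) => [->|xu] /=; first by have := in_sw_new y2; rewrite !inE; sw_simpl.
case: (eqVneq x v) => [->|xv] /=; first by rewrite eqxx.
by rewrite -in_nbhdY nbhdY_y2.
Qed.

Lemma switch_pinned : switch B \in pinned S (v |: T :\ u).
Proof.
case/setIdP: pinB; rewrite inE => /andP[_ /forallP degY] _.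
rewrite !inE switch_nbhdY_y1 switch_nbhdY_y2 !eqxx !andbT.
apply/andP; split; apply/forallP => z; last by rewrite card_switch_nbhdY degY.
rewrite switch_nbhdX; case: (z == u); first by rewrite card_nbhd_u'.
by case: (z == v); rewrite ?card_nbhd_v' ?deg_X.
Qed.

End Pinned.

Lemma switch_inj : {in pinned S T &, injective switch}.
Proof.
move=> B1 B2 pin1 pin2 eqB.
have eq_common : sw_common B1 = sw_common B2.
  by rewrite -(sw_common_switch pin1) -(sw_common_switch pin2) eqB.
have eq_diff : sw_diff B1 = sw_diff B2.
  by rewrite -(sw_diff_switch pin1) -(sw_diff_switch pin2) eqB.
have eq_old : sw_old B1 = sw_old B2.
  have ks2 := sw_old_ksubset pin2; rewrite -eq_diff in ks2.
  apply: (grow_inj (sw_old_ksubset pin1) ks2); rewrite -/(sw_new B1) eq_diff -/(sw_new B2).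
  by rewrite -(sw_old_switch pin1) -(sw_old_switch pin2) eqB.
apply/setP => -[x y].
case: (eqVneq x u) => [->|xu].
  by rewrite -!in_nbhdX (nbhd_u_split pin1) (nbhd_u_split pin2) eq_common eq_old.
case: (eqVneq x v) => [->|xv].
  by rewrite -!in_nbhdX (nbhd_v_split pin1) (nbhd_v_split pin2) eq_common eq_old eq_diff.
by move/setP/(_ (x, y)): eqB; rewrite !in_switch (negPf xu) (negPf xv).
Qed.

Lemma card_pinned_switch_le : #|pinned S T| <= #|pinned S (v |: T :\ u)|.
Proof.
rewrite -(card_in_imset switch_inj); apply: subset_leq_card.
by apply/subsetP => _ /imsetP[B pinB ->]; apply: switch_pinned.
Qed.

End Switch.

Lemma card_pinned_diag_le (S T : {set 'I_n}) :
  #|T| = #|S| -> #|pinned S S| <= #|pinned S T|.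
Proof.
move def_j: #|S :\: T| => j; elim: j T def_j => [|j IH] T def_j eq_card.
  have /eqP <- // : S == T.
  by rewrite eqEcard eq_card leqnn andbT -setD_eq0 -cards_eq0 def_j.
have [u uST] : exists u, u \in S :\: T by apply/set0Pn; rewrite -card_gt0 def_j.
have [v vTS] : exists v, v \in T :\: S.
  apply/set0Pn; rewrite -card_gt0.
  by move: (cardsID S T) (cardsID T S); rewrite setIC eq_card def_j; lia.
move: uST vTS; rewrite !inE => /andP[uT uS] /andP[vS vT].
pose T0 := u |: T :\ v.
have uT0 : u \in T0 by rewrite !inE eqxx.
have vT0 : v \notin T0 by rewrite !inE eqxx orbF; apply: contraNneq vS => ->.
have T0_switch : v |: T0 :\ u = T.
  apply/setP => x; rewrite !inE.
  by case: (eqVneq x v) => [->|_] //=; case: (eqVneq x u) => [->|_]; rewrite ?(negPf uT).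
have card_T0 : #|T0| = #|S|.
  by rewrite cardsU1 !inE (negPf uT) andbF -eq_card (cardsD1 v T) vT.
have diff_T0 : #|S :\: T0| = j.
  have -> : S :\: T0 = (S :\: T) :\ u.
    apply/setP => x; rewrite !inE; case: (eqVneq x u) => [->|_] //=.
    by case: (eqVneq x v) => [->|_]; rewrite ?(negPf vS) ?andbF.
  by move: (cardsD1 u (S :\: T)); rewrite def_j !inE uS (negPf uT) => -[].
rewrite (leq_trans (IH _ diff_T0 card_T0)) // -T0_switch.
exact: card_pinned_switch_le.
Qed.

Definition same_nbhd : {set bigraph n m} :=
  [set B in Bset n m d k | nbhdY B y1 == nbhdY B y2].

Lemma card_same_nbhd_le : #|same_nbhd| * 'C(n, k) <= #|Bset n m d k|.
Proof.
rewrite (card_fibers (Bset n m d k) (nbhdY^~ y1)).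
rewrite (card_fibers same_nbhd (nbhdY^~ y1)) big_distrl /=.
apply: leq_sum => S _.
have -> : [set B in same_nbhd | nbhdY B y1 == S] = pinned S S.
  apply/setP => B; rewrite !inE.
  by case: (eqVneq (nbhdY B y1) S) => [->|]; rewrite ?andbT ?andbF // eq_sym.
have -> : #|[set B in Bset n m d k | nbhdY B y1 == S]| =
          \sum_T #|pinned S T|.
  rewrite (card_fibers _ (nbhdY^~ y2)); apply: eq_bigr => T _.
  by apply: eq_card => B; rewrite !inE andbA.
have [card_S | card_S] := eqVneq #|S| k; last first.
  suff -> : pinned S S = set0 by rewrite cards0.
  apply/setP => B; rewrite !inE; apply/negP => /andP[/andP[_ /forallP degY] /andP[/eqP eqS _]].
  by move: (degY y1); rewrite eqS (negPf card_S).
rewrite -[n in 'C(n, k)](card_ord n) -card_draws mulnC -sum_nat_const.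
apply: (@leq_trans (\sum_(T in [set A : {set 'I_n} | #|A| == k]) #|pinned S T|)).
  apply: leq_sum => T; rewrite inE => /eqP card_T.
  by apply: card_pinned_diag_le; rewrite card_T.
by rewrite [leqRHS](bigID (mem [set A : {set 'I_n} | #|A| == k])) leq_addr.
Qed.

End Switching.

Lemma card_not_H_simple_le n m d k :
  #|Bset n m d k :\: Bstar n m d k| * 'C(n, k) <= 'C(m, 2) * #|Bset n m d k|.
Proof.
have sub_pairs : Bset n m d k :\: Bstar n m d k \subset
    \bigcup_(j : 'I_m) \bigcup_(i : 'I_m | i < j) same_nbhd n d k i j.
  apply/subsetP => B; rewrite !inE => /andP[+ B_in]; rewrite B_in /=.
  case/injectivePn => i [j neq_ij eq_ij]; apply/bigcupP.
  case: (ltngtP i j) => [lt_ij | lt_ji | /val_inj eq_ij']; last by rewrite eq_ij' eqxx in neq_ij.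
    by exists j => //; apply/bigcupP; exists i => //; rewrite !inE B_in eq_ij eqxx.
  by exists i => //; apply/bigcupP; exists j => //; rewrite !inE B_in eq_ij eqxx.
have count_lt (j : 'I_m) : \sum_(i < m | i < j) 1 = j.
  by rewrite (big_ord_narrow (ltnW (ltn_ord j))) sum1_card card_ord.
rewrite (leq_trans (leq_mul (subset_leq_card sub_pairs) (leqnn _))) //.
rewrite (leq_trans (leq_mul (card_bigcup_le _ _) (leqnn _))) //.
rewrite -bin2_sum big_mkord !big_distrl leq_sum // => j _ /=.
rewrite (leq_trans (leq_mul (card_bigcup_le _ _) (leqnn _))) //.
rewrite -[X in _ <= X * _](count_lt j) !big_distrl leq_sum // => i lt_ij /=.
by rewrite mul1n card_same_nbhd_le // neq_ltn lt_ij.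
Qed.

Section RoundRobin.
Variables (n m d k : nat).
Hypotheses (k_gt0 : 0 < k) (k_le_n : k <= n) (km_eq_nd : k * m = n * d).

Let n_gt0 : 0 < n. Proof. exact: leq_trans k_gt0 k_le_n. Qed.

Let mul_ltn a b c x : a < b -> x < c -> x + a * c < b * c.
Proof.
move=> lt_ab lt_xc; apply: (@leq_trans (a.+1 * c)).
  by rewrite mulSn ltn_add2r.
by rewrite leq_mul2r lt_ab orbT.
Qed.

(* Edge [t < n d] joins [t %% n] to [t %/ k]; since [k <= n], the [k]
   consecutive edges at a node of [Y] have distinct residues mod [n], and the
   [d] edges [x + j n] at a node [x] of [X] have distinct quotients by [k]. *)
Definition round_robin : bigraph n m :=
  [set p : 'I_n * 'I_m | [exists t : 'I_(n * d), (t %% n == p.1) && (t %/ k == p.2)]].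

Lemma card_round_robin_nbhdY y : #|nbhdY round_robin y| = k.
Proof.
pose f (i : 'I_k) : 'I_n := Ordinal (ltn_pmod (y * k + i) n_gt0).
have f_inj : injective f.
  move=> i j /(congr1 val)/eqP /=.
  rewrite eqn_modDl !modn_small ?(leq_trans _ k_le_n) // => /eqP.
  exact: val_inj.
suff -> : nbhdY round_robin y = f @: [set: 'I_k] by rewrite card_imset // cardsT card_ord.
apply/setP => x; rewrite !inE; apply/existsP/imsetP => [[t /andP[/eqP tx /eqP ty]] | [i _ ->]].
  exists (Ordinal (ltn_pmod t k_gt0)) => //; apply: val_inj => /=.
  by rewrite -tx -ty -divn_eq.
have lt_t : y * k + i < n * d by rewrite -km_eq_nd [k * m]mulnC addnC mul_ltn.
by exists (Ordinal lt_t); rewrite /= eqxx /= divnMDl // divn_small ?addn0.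
Qed.

Let div_ltn x i j : i < j -> (x + i * n) %/ k < (x + j * n) %/ k.
Proof.
move=> lt_ij; rewrite -[_ < _]/(_.+1 <= _) leq_divRL // mulSn.
have := leq_divM (x + i * n) k; have : i.+1 * n <= j * n by rewrite leq_mul2r lt_ij orbT.
rewrite mulSn; lia.
Qed.

Lemma card_round_robin_nbhdX x : #|nbhdX round_robin x| = d.
Proof.
have lt_q (j : 'I_d) : (x + j * n) %/ k < m.
  by rewrite ltn_divLR // [m * k]mulnC km_eq_nd [n * d]mulnC mul_ltn.
pose g (j : 'I_d) : 'I_m := Ordinal (lt_q j).
have g_inj : injective g.
  move=> i j /(congr1 val) /= eq_q; apply: val_inj.
  by case: (ltngtP i j) => // /(div_ltn x); rewrite eq_q ltnn.
suff -> : nbhdX round_robin x = g @: [set: 'I_d] by rewrite card_imset // cardsT card_ord.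
apply/setP => y; rewrite !inE; apply/existsP/imsetP => [[t /andP[/eqP tx /eqP ty]] | [j _ ->]].
  have lt_j : t %/ n < d by rewrite ltn_divLR // [d * n]mulnC.
  exists (Ordinal lt_j) => //; apply: val_inj => /=.
  by rewrite -ty -tx addnC -divn_eq.
have lt_t : x + j * n < n * d by rewrite [n * d]mulnC mul_ltn.
by exists (Ordinal lt_t); rewrite /= eqxx andbT addnC modnMDl modn_small.
Qed.

Lemma round_robin_biregular : round_robin \in Bset n m d k.
Proof.
rewrite inE; apply/andP; split; apply/forallP => z; apply/eqP.
  exact: card_round_robin_nbhdX.
exact: card_round_robin_nbhdY.
Qed.

End RoundRobin.

Section Fibres.
Variables (n m d k : nat).

Definition phi_fibre (H : hypergraph n) : {set bigraph n m} :=
  [set B in Bstar n m d k | phi B == H].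

Lemma nbhdY_in_phi (B : bigraph n m) y : nbhdY B y \in phi B.
Proof. exact: imset_f. Qed.

Lemma phi_Hset B : B \in Bstar n m d k -> phi B \in Hset n d k.
Proof.
rewrite !inE => /andP[/andP[/forallP degX /forallP degY] /injectiveP nbhdY_inj].
apply/andP; split; first by apply/forall_inP => _ /imsetP[y _ ->]; apply: degY.
apply/forallP => x; suff -> : [set e in phi B | x \in e] = nbhdY B @: nbhdX B x.
  by rewrite card_imset //; apply: degX.
apply/setP => e; rewrite !inE; apply/andP/imsetP => [[/imsetP[y _ ->] xy] | [y]].
  by exists y; rewrite // in_nbhdX -in_nbhdY.
by rewrite in_nbhdX => xy ->; rewrite nbhdY_in_phi in_nbhdY.
Qed.

Lemma card_Hset_edges H : H \in Hset n d k -> k * #|H| = n * d.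
Proof.
rewrite inE => /andP[/forall_inP card_e /forallP deg_x].
have -> : k * #|H| = \sum_(e in H) #|e|.
  by rewrite mulnC -sum_nat_const; apply: eq_bigr => e /card_e/eqP.
have -> : n * d = \sum_(x : 'I_n) #|[set e in H | x \in e]|.
  by rewrite (eq_bigr (fun=> d)) => [|x _]; [rewrite sum_nat_const card_ord mulnC | apply/eqP].
under eq_bigr do rewrite card_indicator; rewrite exchange_big /=.
apply: eq_bigr => x _; rewrite card_indicator big_mkcond /=.
by apply: eq_bigr => e _; rewrite inE; case: (e \in H); case: (x \in e).
Qed.

Section Relabel.
Variables (H H' : hypergraph n).
Hypotheses (k_gt0 : 0 < k) (H_in : H \in Hset n d k) (H'_in : H' \in Hset n d k).

Let card_HH' : #|H| = #|H'|.
Proof.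
by apply/eqP; rewrite -(eqn_pmul2l k_gt0) (card_Hset_edges H_in) (card_Hset_edges H'_in).
Qed.

Let g : {set 'I_n} -> {set 'I_n} := enum_embed H H' set0.
Let g_inj : {in H &, injective g}. Proof. exact: enum_embed_inj (eq_leq card_HH'). Qed.
Let g_mem : {in H, forall e, g e \in H'}. Proof. exact: enum_embed_mem (eq_leq card_HH'). Qed.

Definition relabel (B : bigraph n m) : bigraph n m := [set p | p.1 \in g (nbhdY B p.2)].

Lemma relabel_nbhdY B y : nbhdY (relabel B) y = g (nbhdY B y).
Proof. by apply/setP => x; rewrite !inE. Qed.

Let nbhdY_fibre B y : B \in phi_fibre H -> nbhdY B y \in H.
Proof. by rewrite inE => /andP[_ /eqP <-]; apply: nbhdY_in_phi. Qed.

Lemma relabel_inj : {in phi_fibre H &, injective relabel}.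
Proof.
move=> B1 B2 B1_in B2_in eqB; apply/setP => -[x y].
have /g_inj eq_y : g (nbhdY B1 y) = g (nbhdY B2 y) by rewrite -!relabel_nbhdY eqB.
by rewrite -!in_nbhdY eq_y ?nbhdY_fibre.
Qed.

Lemma relabel_fibre B : B \in phi_fibre H -> relabel B \in phi_fibre H'.
Proof.
move=> B_in; have := B_in; rewrite !inE => /andP[/andP[_ /injectiveP nbhdY_inj] /eqP phiB].
pose F y := g (nbhdY B y).
have F_inj : injective F.
  by move=> y1 y2 /g_inj => /(_ (nbhdY_fibre _ B_in) (nbhdY_fibre _ B_in)) /nbhdY_inj.
have F_onto : F @: [set: 'I_m] = H'.
  apply/eqP; rewrite eqEcard; apply/andP; split.
    by apply/subsetP => _ /imsetP[y _ ->]; apply/g_mem/nbhdY_fibre.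
  by rewrite card_imset // -card_HH' -phiB card_imset // cardsT.
have := H'_in; rewrite inE => /andP[/forall_inP card_e /forallP deg_x].
have phi_relabel : phi (relabel B) = H'.
  rewrite -F_onto; apply/setP => e.
  by apply/imsetP/imsetP => -[y _ ->]; exists y; rewrite ?relabel_nbhdY.
rewrite phi_relabel eqxx andbT; apply/andP; split; last first.
  by apply/injectiveP => y1 y2; rewrite !relabel_nbhdY => /F_inj.
apply/andP; split; last first.
  by apply/forallP => y; rewrite relabel_nbhdY card_e // g_mem // nbhdY_fibre.
apply/forallP => x.
suff -> : nbhdX (relabel B) x = [set y | x \in F y].
  rewrite -(card_imset _ F_inj) -(eqP (deg_x x)) -F_onto.
  apply/eqP; apply: eq_card => e; rewrite !inE.
  apply/imsetP/andP => [[y] | [/imsetP[y _ ->] xy]]; last by exists y; rewrite ?inE.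
  by rewrite inE => xy ->; split; rewrite ?imset_f.
by apply/setP => y; rewrite !inE.
Qed.

Lemma card_phi_fibre_le : #|phi_fibre H| <= #|phi_fibre H'|.
Proof.
rewrite -(card_in_imset relabel_inj); apply/subset_leq_card/subsetP.
by move=> _ /imsetP[B B_in ->]; apply: relabel_fibre.
Qed.

End Relabel.
End Fibres.

Local Open Scope ring_scope.

Section CondImage.
Variables (R : realType) (T U : finType) (mu nu : T -> R) (A : {set T}).

Definition cond_image (rho : T -> R) (f : T -> U) (z : U) : R :=
  (\sum_(x in A | f x == z) rho x) / prob rho A.

Lemma dTV_ge0 : 0 <= dTV mu nu.
Proof. by rewrite /dTV mulr_ge0 ?invr_ge0 // sumr_ge0. Qed.

Lemma dist_prob_le_in : `|prob mu A - prob nu A| <= \sum_(x in A) `|mu x - nu x|.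
Proof. by rewrite /prob -sumrB ler_norm_sum. Qed.

Let sum_split (F : T -> R) : \sum_x F x = \sum_(x in A) F x + \sum_(x in ~: A) F x.
Proof. by rewrite (bigID (mem A)) /=; congr (_ + _); apply: eq_bigl => x; rewrite inE. Qed.

Hypotheses (mu1 : \sum_x mu x = 1) (nu1 : \sum_x nu x = 1).

Lemma dist_prob_le_out : `|prob mu A - prob nu A| <= \sum_(x in ~: A) `|mu x - nu x|.
Proof.
have : \sum_x (mu x - nu x) = 0 by rewrite sumrB mu1 nu1 subrr.
rewrite sum_split => /eqP; rewrite addr_eq0 => /eqP eq_out.
by rewrite /prob -sumrB eq_out normrN ler_norm_sum.
Qed.

Lemma dist_prob_le_dTV : `|prob mu A - prob nu A| <= dTV mu nu.
Proof.
rewrite /dTV sum_split.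
have := lerD dist_prob_le_in dist_prob_le_out; lra.
Qed.

Hypotheses (mu_ge0 : forall x, 0 <= mu x) (mu_A : 0 < prob mu A) (nu_A : 0 < prob nu A).

Let p := prob mu A.
Let q := prob nu A.

Lemma sum_dist_rescaled_le :
  \sum_(x in A) `|mu x / p - nu x / q| <= 2 * dTV mu nu / q.
Proof.
have split_x x : `|mu x / p - nu x / q| <= `|mu x - nu x| / q + mu x * `|q - p| / (p * q).
  have -> : mu x / p - nu x / q = (mu x - nu x) / q + mu x * (q - p) / (p * q).
    by field; rewrite ?gt_eqF ?mulr_gt0.
  rewrite (le_trans (ler_normD _ _)) // !normrM !normfV (gtr0_norm nu_A).
  by rewrite (gtr0_norm (mulr_gt0 mu_A nu_A)) (ger0_norm (mu_ge0 x)).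
rewrite (le_trans (ler_sum _ (fun x _ => split_x x))) // big_split /= -!mulr_suml -/p.
have -> : p * `|q - p| / (p * q) = `|q - p| / q by field; rewrite ?gt_eqF.
rewrite -mulrDl ler_pM2r ?invr_gt0 // distrC /dTV mulrA mulfV // mul1r.
by rewrite [leRHS]sum_split lerD2l dist_prob_le_out.
Qed.

Lemma dTV_cond_image_le (f : T -> U) :
  dTV (cond_image mu f) (cond_image nu f) <= dTV mu nu / q.
Proof.
have sum_le : \sum_z `|cond_image mu f z - cond_image nu f z| <=
              \sum_(x in A) `|mu x / p - nu x / q|.
  rewrite (partition_big f xpredT) //=; apply: ler_sum => z _.
  by rewrite /cond_image !mulr_suml -sumrB ler_norm_sum.
rewrite /dTV (le_trans (ler_wpM2l _ (le_trans sum_le sum_dist_rescaled_le))) ?invr_ge0 //.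
by rewrite !mulrA mulVf ?mul1r ?pnatr_eq0.
Qed.

End CondImage.

Lemma geometric_eseries_le (R : realType) (c p : R) : 0 <= c -> 0 < p <= 1 ->
  (\sum_(t <oo) (c * (1 - p) ^+ t)%:E <= (p^-1 * c)%:E)%E.
Proof.
move=> c_ge0 /andP[p_gt0 p_le1]; have z_ge0 : 0 <= 1 - p by rewrite subr_ge0.
apply: lime_le; first by apply: is_cvg_nneseries => t _ _; rewrite lee_fin mulr_ge0 ?exprn_ge0.
apply: nearW => N; rewrite sumEFin lee_fin.
have z_lt1 : 1 - p < 1 by lra.
rewrite -[leLHS]/(series (geometric c (1 - p)) N) geometric_seriesE ?lt_eqF //=.
have -> : 1 - (1 - p) = p by ring.
rewrite mulrAC [leRHS]mulrC mulrBr mulr1 gerBl.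
by apply: mulr_ge0; [apply: divr_ge0; lra | exact: exprn_ge0].
Qed.

Lemma prob_le1 (R : realType) (T : finType) (mu : T -> R) (A : {set T}) :
  is_distr mu -> prob mu A <= 1.
Proof.
case=> mu_ge0 <-; rewrite [leRHS](bigID (mem A)) lerDl.
by apply: sumr_ge0 => x _; apply: mu_ge0.
Qed.

Lemma prob_unif (R : realType) (T : finType) (A B : {set T}) :
  B \subset A -> prob (unif R A) B = #|B|%:R / #|A|%:R.
Proof.
move=> sub_BA; rewrite /prob /unif (eq_bigr (fun=> #|A|%:R^-1)) => [|x xB].
  by rewrite sumr_const mulr_natl.
by rewrite (subsetP sub_BA x xB).
Qed.

Lemma sum_unif (R : realType) (T : finType) (A : {set T}) :
  (0 < #|A|)%N -> \sum_x unif R A x = 1.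
Proof.
move=> A_gt0; rewrite /unif -big_mkcond sumr_const -[_ *+ _]mulr_natr mulVf //.
by rewrite pnatr_eq0 -lt0n.
Qed.

Section Main.
Variables (R : realType) (n d k m : nat).
Hypotheses (k_ge3 : (3 <= k)%N) (km_eq_nd : (k * m)%N = (n * d)%N)
  (bin_lt : ('C(m, 2) < 'C(n, k))%N).

Let k_gt0 : (0 < k)%N. Proof. exact: leq_trans k_ge3. Qed.
Let Cnk_gt0 : (0 < 'C(n, k))%N. Proof. exact: leq_ltn_trans bin_lt. Qed.
Let k_le_n : (k <= n)%N. Proof. by rewrite -bin_gt0 Cnk_gt0. Qed.

Let card_Bset_gt0 : (0 < #|Bset n m d k|)%N.
Proof. by apply/card_gt0P; exists (round_robin n m d k); apply: round_robin_biregular. Qed.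

Let Bstar_sub : Bstar n m d k \subset Bset n m d k.
Proof. by apply/subsetP => B; rewrite inE => /andP[]. Qed.

Lemma piB_distr : is_distr (piB R n m d k).
Proof.
split; last exact: sum_unif.
by move=> B; rewrite /piB /unif; case: ifP => // _; rewrite invr_ge0.
Qed.

Lemma prob_Bstar_ge :
  1 - 'C(m, 2)%:R / 'C(n, k)%:R <= prob (piB R n m d k) (Bstar n m d k).
Proof.
have := card_not_H_simple_le n m d k.
rewrite cardsD (setIidPr Bstar_sub) -(ler_nat R) !natrM natrB ?subset_leq_card //.
rewrite prob_unif //.
set a := #|Bset n m d k|%:R; set b := #|Bstar n m d k|%:R.
set c := 'C(n, k)%:R; set e := 'C(m, 2)%:R => count_le.
have a_gt0 : 0 < a by rewrite ltr0n.
have c_gt0 : 0 < c by rewrite ltr0n.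
rewrite -subr_ge0.
have -> : b / a - (1 - e / c) = (e * a - (a - b) * c) / (a * c) by field; rewrite ?gt_eqF.
by rewrite divr_ge0 ?subr_ge0 // mulr_ge0 ?ltW.
Qed.

Let phi_fibre_empty H : H \notin Hset n d k -> phi_fibre m d k H = set0.
Proof.
move=> H_notin; apply/setP => B; rewrite in_set0 inE; apply/negP => /andP[B_in /eqP phiB].
by move: H_notin; rewrite -phiB (phi_Hset B_in).
Qed.

Lemma card_Bstar_fibres H : H \in Hset n d k ->
  #|Bstar n m d k| = (#|Hset n d k| * #|phi_fibre m d k H|)%N.
Proof.
move=> H_in; rewrite (card_fibers _ phi) (bigID (mem (Hset n d k))) /=.
rewrite [X in (_ + X)%N]big1 ?addn0 => [|H' H'_notin]; last first.
  by rewrite -[LHS]/#|phi_fibre m d k H'| phi_fibre_empty ?cards0.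
rewrite -sum_nat_const; apply: eq_bigr => H' H'_in.
by apply/eqP; rewrite eqn_leq !card_phi_fibre_le.
Qed.

Let card_Bstar_gt0 : (0 < #|Bstar n m d k|)%N.
Proof.
rewrite lt0n; apply/negP => /eqP card0; move: prob_Bstar_ge.
rewrite prob_unif // card0 mul0r subr_le0 ler_pdivlMr ?ltr0n // mul1r ler_nat.
by rewrite leqNgt bin_lt.
Qed.

Lemma piH_cond_image : piH R n d k = cond_image (Bstar n m d k) (piB R n m d k) phi.
Proof.
apply/funext => H; rewrite /cond_image.
have -> : \sum_(B in Bstar n m d k | phi B == H) piB R n m d k B =
          prob (piB R n m d k) (phi_fibre m d k H).
  by apply: eq_bigl => B; rewrite [in RHS]inE.
have fibre_sub : phi_fibre m d k H \subset Bset n m d k.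
  by apply/subsetP => B; rewrite inE => /andP[/(subsetP Bstar_sub)].
rewrite !prob_unif // /piH /unif.
case: ifPn => [H_in | /phi_fibre_empty ->]; last by rewrite cards0 !mul0r.
have := card_Bstar_gt0; rewrite (card_Bstar_fibres H_in) muln_gt0 => /andP[H_gt0 fib_gt0].
rewrite natrM; field.
by rewrite !pnatr_eq0 -!lt0n H_gt0 fib_gt0 card_Bset_gt0.
Qed.

Section Sampling.
Variables (eps c0 : R) (sigma : bigraph n m -> R).
Hypotheses (sigma_distr : is_distr sigma) (eps_gt0 : 0 < eps)
  (dTV_le : dTV sigma (piB R n m d k) <= eps) (c0_lt : c0 < 1 - eps)
  (bin_le : 'C(m, 2)%:R <= c0 * 'C(n, k)%:R).

Let q := prob (piB R n m d k) (Bstar n m d k).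
Let p := prob sigma (Bstar n m d k).

Let q_ge : 1 - c0 <= q.
Proof.
have : 'C(m, 2)%:R / 'C(n, k)%:R <= c0 :> R by rewrite ler_pdivrMr ?ltr0n.
by have := prob_Bstar_ge; rewrite -/q; lra.
Qed.

Let p_ge : 1 - c0 - eps <= p.
Proof.
case: sigma_distr => _ sigma1; case: piB_distr => _ piB1.
have := le_trans (dist_prob_le_dTV (Bstar n m d k) sigma1 piB1) dTV_le.
by rewrite -/p -/q distrC; have := ler_norm (q - p); move: q_ge; lra.
Qed.

Lemma dTV_hs_output_le :
  dTV (hs_output d k sigma) (piH R n d k) <= 3 * eps / (2 * (1 - c0)).
Proof.
case: sigma_distr => sigma_ge0 sigma1; case: piB_distr => _ piB1.
have p_gt0 : 0 < p by move: p_ge c0_lt; lra.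
have q_gt0 : 0 < q by move: q_ge c0_lt eps_gt0; lra.
rewrite piH_cond_image.
apply: (le_trans (dTV_cond_image_le sigma1 piB1 sigma_ge0 p_gt0 q_gt0 phi)); rewrite -/q.
have : dTV sigma (piB R n m d k) / q <= eps / (1 - c0).
  apply: ler_pM => //; [exact: dTV_ge0 | by rewrite invr_ge0 ltW |].
  by rewrite lef_pV2 ?posrE //; move: q_ge c0_lt eps_gt0; lra.
have : 0 <= eps / (1 - c0) by rewrite divr_ge0 //; move: c0_lt eps_gt0; lra.
have -> : 3 * eps / (2 * (1 - c0)) = 3 / 2 * (eps / (1 - c0)) :> R by rewrite invfM; ring.
lra.
Qed.

Lemma hs_runtime_le tau rho : 0 <= tau -> 0 <= rho ->
  (hs_runtime d k sigma tau rho <= ((1 - c0 - eps)^-1 * (tau + rho))%:E)%E.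
Proof.
move=> tau_ge0 rho_ge0.
apply: le_trans (geometric_eseries_le (addr_ge0 tau_ge0 rho_ge0) _) _.
  by rewrite (prob_le1 _ sigma_distr) andbT -/p; move: p_ge c0_lt; lra.
by rewrite lee_fin ler_wpM2r ?addr_ge0 // lef_pV2 ?posrE -/p //; move: p_ge c0_lt; lra.
Qed.

End Sampling.

End Main.

Theorem theorem1p2 (R : realType) (n d k m : nat)
  (hk : (3 <= k)%N) (hm : (k * m)%N = (n * d)%N)
  (hbin : ('C(m, 2) < 'C(n, k))%N) :
  prob (piB R n m d k) (Bstar n m d k)
    >= 1 - 'C(m, 2)%:R / 'C(n, k)%:R
  /\
  forall (eps c0 tau rho : R) (sigma : bigraph n m -> R),
    is_distr sigma ->
    (forall B, B \notin Bset n m d k -> sigma B = 0) ->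
    0 < eps < 1 ->
    dTV sigma (piB R n m d k) <= eps ->
    0 < c0 < 1 - eps ->
    'C(m, 2)%:R <= c0 * 'C(n, k)%:R ->
    0 <= tau -> 0 <= rho ->
    dTV (hs_output d k sigma) (piH R n d k) <= 3 * eps / (2 * (1 - c0))
    /\ (hs_runtime d k sigma tau rho <= ((1 - c0 - eps)^-1 * (tau + rho))%:E)%E.
Proof.
split=> [|eps c0 tau rho sigma sigma_distr _ /andP[eps_gt0 _] dTV_le /andP[_ c0_lt]
  bin_le tau_ge0 rho_ge0]; first exact: prob_Bstar_ge.
by split; [apply: dTV_hs_output_le | apply: hs_runtime_le].
Qed.
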